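(* The one-dimensional subalgebras of ${\rm A}_5$ are exactly $\langle e_1\rangle$, $\langle e_2\rangle$ and $\langle e_1+\alpha e_2\pm e_3\rangle$ ($\alpha\in\mathbb{C}$). Up to automorphisms of ${\rm A}_5$, every one-dimensional subalgebra is equivalent to one of $\langle e_1\rangle$, $\langle e_2\rangle$, $\langle e_1+e_3\rangle$, $\langle e_1-e_3\rangle$.
   Context: ${\rm A}_5$ is the complex algebra with basis $e_1,e_2,e_3$, unit $e_1$ ($e_1e_i=e_ie_1=e_i$), $e_2e_3=e_2$, $e_3e_2=-e_2$, $e_3e_3=e_1$; all other products of basis elements are zero. A subalgebra is a linear subspace closed under multiplication (it need not contain $e_1$). Equivalence up to automorphisms means one is mapped onto the other by an algebra automorphism. $\langle S\rangle$ denotes linear span. *)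

From HB Require Import structures.
From mathcomp Require Import all_boot all_order all_algebra.
From mathcomp Require Import complex.
From mathcomp Require Import reals.
Set Implicit Arguments. Unset Strict Implicit. Unset Printing Implicit Defensive.
Import Order.TTheory GRing.Theory Num.Theory.
Local Open Scope ring_scope.

Section A5.
Variable R : realType.
Notation C := (R[i])%C.

Definition A5 := 'rV[C]_3.

Definition e1 : A5 := delta_mx 0 (0 : 'I_3).
Definition e2 : A5 := delta_mx 0 (1 : 'I_3).
Definition e3 : A5 := delta_mx 0 (2 : 'I_3).

(* Bilinear product determined by e1 unit, e2e3 = e2, e3e2 = -e2, e3e3 = e1,
   all other products of basis elements zero. *)
Definition mulA (x y : A5) : A5 :=
  let a := x 0 0 in let b := x 0 1 in let c := x 0 2 in
  let a' := y 0 0 in let b' := y 0 1 in let c' := y 0 2 in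
  (a * a' + c * c') *: e1
  + (a * b' + b * a' + b * c' - c * b') *: e2
  + (a * c' + c * a') *: e3.

Definition is_subalgebra (S : {vspace A5}) : Prop :=
  forall x y, x \in S -> y \in S -> mulA x y \in S.

Definition is_automorphism (f : 'End(A5)) : Prop :=
  lker f = 0%VS /\ limg f = fullv /\
  forall x y, f (mulA x y) = mulA (f x) (f y).

Definition aut_equiv (S T : {vspace A5}) : Prop :=
  exists f : 'End(A5), is_automorphism f /\ (f @: S)%VS = T.

End A5.

From Pilot Require Import Defs.
From HB Require Import structures.
From mathcomp Require Import all_boot all_order all_algebra.
From mathcomp Require Import complex.
From mathcomp Require Import reals.
From mathcomp Require Import ring.
Import Order.TTheory GRing.Theory Num.Theory.
Set Implicit Arguments.
Unset Strict Implicit.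
Unset Printing Implicit Defensive.

Local Open Scope ring_scope.

(* A line <[v]> with v = (a, b, c) is a subalgebra iff v * v = (a^2 + c^2, 2ab, 2ac) is
   a multiple l v of v.  If a = 0 this forces c = 0, giving <[e2]>; if a != 0 and c = 0
   it forces l = a and b = 0, giving <[e1]>; otherwise l = 2a and c^2 = a^2, giving
   <[e1 + (b/a) e2 +- e3]>.  The shears e3 |-> e3 + beta e2 (fixing e1 and e2) are
   automorphisms, and a suitable shear kills the e2-component of e1 + alpha e2 +- e3. *)

Lemma row3_eq (T : Type) (u w : 'rV[T]_3) :
  u 0 0 = w 0 0 -> u 0 1 = w 0 1 -> u 0 2 = w 0 2 -> u = w.
Proof.
move=> u0 u1 u2; apply/rowP => -[[|[|[|//]]] lt_j3].
- by rewrite (_ : Ordinal lt_j3 = 0) //; apply/val_inj.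
- by rewrite (_ : Ordinal lt_j3 = 1) //; apply/val_inj.
- by rewrite (_ : Ordinal lt_j3 = 2) //; apply/val_inj.
Qed.

Section VectorLines.
Variables (K : fieldType) (vT : vectType K).

Lemma vlineZ (k : K) (w : vT) : k != 0 -> <[k *: w]>%VS = <[w]>%VS.
Proof.
move=> k_nz; apply/eqP; rewrite eqEsubv -!memvE memvZ ?memv_line //=.
by rewrite -{1}[w](scalerK k_nz) memvZ ?memv_line.
Qed.

Lemma dimv1_vline (U : {vspace vT}) : \dim U = 1%N -> exists2 v, v != 0 & U = <[v]>%VS.
Proof.
move=> dimU1; have v_nz : vpick U != 0.
  by rewrite vpick0; apply: contra_eqN dimU1 => /eqP->; rewrite dimv0.
exists (vpick U) => //; apply/eqP.
by rewrite eq_sym eqEdim -memvE memv_pick dim_vline v_nz dimU1.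
Qed.

End VectorLines.

Lemma square_eigen_cases (F : idomainType) (a b c l : F) :
    a * a + c * c = l * a -> a * b *+ 2 = l * b -> a * c *+ 2 = l * c ->
  [\/ a = 0 /\ c = 0, a != 0 /\ b = 0 /\ c = 0, a != 0 /\ c = a | a != 0 /\ c = - a].
Proof.
move=> eq0 eq1 eq2; have [a0 | a_nz] := eqVneq a 0.
  move: eq0; rewrite a0 !mulr0 add0r => /eqP.
  by rewrite mulf_eq0 orbb => /eqP c0; constructor 1.
have [c0 | c_nz] := eqVneq c 0.
  have la : l = a by apply: (mulIf a_nz); rewrite -eq0 c0 mulr0 addr0.
  have : a * b = 0 by apply/(addIr (a * b)); rewrite add0r -mulr2n eq1 la.
  by move/eqP; rewrite mulf_eq0 (negbTE a_nz) => /eqP b0; constructor 2.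
have l2a : l = a *+ 2 by apply: (mulIf c_nz); rewrite -eq2 mulrnAl.
have : (c - a) * (c + a) = 0.
  by rewrite -(subrr (l * a)) -{1}eq0 l2a; ring.
move/eqP; rewrite mulf_eq0 subr_eq0 addr_eq0 => /orP[]/eqP ca.
  by constructor 3.
by constructor 4.
Qed.

Section A5Lines.
Variable R : realType.
Notation C := (R[i])%C.
Notation A := (A5 R).
Notation e1 := (e1 R).
Notation e2 := (e2 R).
Notation e3 := (e3 R).
Local Notation mulA := (@Defs.mulA R).

Lemma mulA_coord0 (x y : A) : mulA x y 0 0 = x 0 0 * y 0 0 + x 0 2 * y 0 2.
Proof. by rewrite /mulA !mxE /= !mulr0 !mulr1 !addr0. Qed.

Lemma mulA_coord1 (x y : A) :
  mulA x y 0 1 = x 0 0 * y 0 1 + x 0 1 * y 0 0 + x 0 1 * y 0 2 - x 0 2 * y 0 1.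
Proof. by rewrite /mulA !mxE /= !mulr0 !mulr1 !addr0 add0r. Qed.

Lemma mulA_coord2 (x y : A) : mulA x y 0 2 = x 0 0 * y 0 2 + x 0 2 * y 0 0.
Proof. by rewrite /mulA !mxE /= !mulr0 !mulr1 !add0r. Qed.

Definition mulA_coordE := (mulA_coord0, mulA_coord1, mulA_coord2, mxE).

Lemma subalgebra_vline (v : A) : is_subalgebra <[v]>%VS <-> mulA v v \in <[v]>%VS.
Proof.
split=> [|vv_v x y /vlineP[k ->] /vlineP[m ->]]; first by apply; rewrite memv_line.
have -> : mulA (k *: v) (m *: v) = (k * m) *: mulA v v.
  by apply: row3_eq; rewrite !mulA_coordE; ring.
exact: memvZ.
Qed.

Lemma vline_sqr_cases (v : A) : v != 0 -> mulA v v \in <[v]>%VS ->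
  [\/ <[v]>%VS = <[e1]>%VS, <[v]>%VS = <[e2]>%VS,
      exists alpha, <[v]>%VS = <[e1 + alpha *: e2 + e3]>%VS
    | exists alpha, <[v]>%VS = <[e1 + alpha *: e2 - e3]>%VS].
Proof.
move=> v_nz /vlineP[l vv_lv].
have coord_eq i : mulA v v 0 i = (l *: v) 0 i by rewrite vv_lv.
have eq0 : v 0 0 * v 0 0 + v 0 2 * v 0 2 = l * v 0 0.
  by move: (coord_eq 0); rewrite !mulA_coordE.
have eq1 : v 0 0 * v 0 1 *+ 2 = l * v 0 1.
  by move: (coord_eq 1); rewrite !mulA_coordE => <-; ring.
have eq2 : v 0 0 * v 0 2 *+ 2 = l * v 0 2.
  by move: (coord_eq 2); rewrite !mulA_coordE => <-; ring.
set a := v 0 0 in eq0 eq1 eq2 *; set b := v 0 1 in eq1 *; set c := v 0 2 in eq0 eq2 *.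
case: (square_eigen_cases eq0 eq1 eq2) => [[a0 c0] | [a_nz [b0 c0]] | [a_nz ca] | [a_nz ca]].
- have vE : v = b *: e2 by apply: row3_eq; rewrite !mxE -/a -/b -/c ?a0 ?c0 /=; ring.
  have b_nz : b != 0 by apply: contraNneq v_nz => b0; rewrite vE b0 scale0r.
  by constructor 2; rewrite vE vlineZ.
- have vE : v = a *: e1 by apply: row3_eq; rewrite !mxE -/a -/b -/c ?b0 ?c0 /=; ring.
  by constructor 1; rewrite vE vlineZ.
- have vE : v = a *: (e1 + (b / a) *: e2 + e3).
    by apply: row3_eq; rewrite !mxE -/a -/b -/c ?ca /=; field.
  by constructor 3; exists (b / a); rewrite vE vlineZ.
- have vE : v = a *: (e1 + (b / a) *: e2 - e3).
    by apply: row3_eq; rewrite !mxE -/a -/b -/c ?ca /=; field.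
  by constructor 4; exists (b / a); rewrite vE vlineZ.
Qed.

Lemma inj_morph_automorphism (f : 'End(A)) :
  injective f -> {morph f : x y / mulA x y} -> is_automorphism f.
Proof.
move=> f_inj f_mul; have kerf0 : lker f == 0%VS by apply/lker0P.
by split; [exact/eqP | split; [exact: lker0_limgf | exact: f_mul]].
Qed.

Lemma aut_equiv_vline (f : 'End(A)) (v w : A) :
  is_automorphism f -> f v = w -> aut_equiv <[v]>%VS <[w]>%VS.
Proof. by move=> f_aut fv_w; exists f; rewrite limg_line fv_w. Qed.

Lemma aut_equiv_refl (U : {vspace A}) : aut_equiv U U.
Proof.
exists \1%VF; split; last exact: lim1g.
by apply: inj_morph_automorphism => [x y | x y]; rewrite !lfunE.
Qed.

Definition shear (beta : C) : 'End(A) :=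
  linfun (mulmxr (1%:M + beta *: delta_mx 2 1)).

Lemma shearE beta (x : A) : shear beta x = x + (beta * x 0 2) *: e2.
Proof.
rewrite lfunE /= mulmxDr mulmx1 -scalemxAr; congr (_ + _).
apply/rowP => j; rewrite !mxE !big_ord_recl big_ord0 !mxE /=.
case: j => [[|[|[|//]]] ?] /=; rewrite ?(mulr0, mulr1, addr0, add0r) //.
by congr (_ * x 0 _); apply: val_inj.
Qed.

Lemma shearK beta : cancel (shear beta) (shear (- beta)).
Proof. by move=> x; apply: row3_eq; rewrite !shearE !mxE /=; ring. Qed.

Lemma shear_automorphism beta : is_automorphism (shear beta).
Proof.
apply: inj_morph_automorphism; first exact: can_inj (shearK beta).
by move=> x y; apply: row3_eq; rewrite !shearE !mulA_coordE /=; ring.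
Qed.

End A5Lines.

Theorem mainTheorem12 (R : realType) (S : {vspace A5 R}) :
  \dim S = 1%N ->
  (is_subalgebra S <->
     [\/ S = <[e1 R]>%VS, S = <[e2 R]>%VS,
         exists alpha : R[i], S = <[e1 R + alpha *: e2 R + e3 R]>%VS
       | exists alpha : R[i], S = <[e1 R + alpha *: e2 R - e3 R]>%VS])
  /\
  (is_subalgebra S ->
     [\/ aut_equiv S <[e1 R]>%VS, aut_equiv S <[e2 R]>%VS,
         aut_equiv S <[e1 R + e3 R]>%VS | aut_equiv S <[e1 R - e3 R]>%VS]).
Proof.
move=> /dimv1_vline[v v_nz ->].
split.
  split=> [/subalgebra_vline/(vline_sqr_cases v_nz) //|].
  case=> [->|->|[alpha ->]|[alpha ->]]; apply/subalgebra_vline/vlineP.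
  - by exists 1; apply: row3_eq; rewrite !mulA_coordE /=; ring.
  - by exists 0; apply: row3_eq; rewrite !mulA_coordE /=; ring.
  - by exists 2; apply: row3_eq; rewrite !mulA_coordE /=; ring.
  - by exists 2; apply: row3_eq; rewrite !mulA_coordE /=; ring.
move/subalgebra_vline/(vline_sqr_cases v_nz) => -[->|->|[alpha ->]|[alpha ->]].
- by constructor 1; exact: aut_equiv_refl.
- by constructor 2; exact: aut_equiv_refl.
- constructor 3; apply: (aut_equiv_vline (shear_automorphism (- alpha))).
  by apply: row3_eq; rewrite shearE !mxE /=; ring.
- constructor 4; apply: (aut_equiv_vline (shear_automorphism alpha)).
  by apply: row3_eq; rewrite shearE !mxE /=; ring.
Qed.
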